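(* Let $m\ge 1$ and let $G,\Sigma\in C^2(\mathbb{R}^m)$. Then $$(\Xi+\nabla_\tau G(\tau))\cdot(\tau+\nabla_\Xi\Sigma(\Xi))\ \ge\ 0\qquad\text{for all }(\Xi,\tau)\in\mathbb{R}^m\times\mathbb{R}^m$$ holds if and only if all three of the following hold: (i) for every $(\Xi,\tau)\in\mathbb{R}^m\times\mathbb{R}^m$: $\Xi+\nabla_\tau G(\tau)=0$ if and only if $\tau+\nabla_\Xi\Sigma(\Xi)=0$; (ii) $G$ is convex; (iii) $\Sigma$ is convex.
   Context: $\nabla_\tau G$ denotes the gradient of $G$ with respect to its argument $\tau\in\mathbb{R}^m$, and $\nabla_\Xi\Sigma$ the gradient of $\Sigma$ with respect to its argument $\Xi\in\mathbb{R}^m$; the dot denotes the Euclidean inner product on $\mathbb{R}^m$. *)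

(* R : realType, R^m rendered as row vectors 'rV[R]_m. *)
From HB Require Import structures.
From mathcomp Require Import all_boot all_order all_algebra.
From mathcomp Require Import all_classical all_reals all_analysis.
Set Implicit Arguments. Unset Strict Implicit. Unset Printing Implicit Defensive.
Import Order.TTheory GRing.Theory Num.Theory.
Import numFieldNormedType.Exports.
Local Open Scope classical_set_scope.
Local Open Scope ring_scope.

Definition evec (R : realType) (m : nat) (i : 'I_m) : 'rV[R]_m := delta_mx 0 i.

Definition partial (R : realType) (m : nat) (i : 'I_m)
  (f : 'rV[R]_m -> R) : 'rV[R]_m -> R :=
  fun x => ('D_(evec R i) f x : R).

Definition grad (R : realType) (m : nat) (f : 'rV[R]_m -> R) (x : 'rV[R]_m)
  : 'rV[R]_m := \row_i partial i f x.

Definition dotv (R : realType) (m : nat) (u v : 'rV[R]_m) : R :=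
  \sum_(i < m) u 0 i * v 0 i.

Definition C2 (R : realType) (m : nat) (f : 'rV[R]_m -> R) : Prop :=
  continuous f /\
  forall i j : 'I_m,
    (forall x, derivable f x (evec R i)) /\
    continuous (partial i f) /\
    (forall x, derivable (partial i f) x (evec R j)) /\
    continuous (partial j (partial i f)).

From HB Require Import structures.
From mathcomp Require Import all_boot all_order all_algebra.
From mathcomp Require Import all_classical all_reals all_analysis.
From mathcomp Require Import lra.
Import Order.TTheory GRing.Theory Num.Theory.
Import numFieldNormedType.Exports.
Set Implicit Arguments.
Unset Strict Implicit.
Unset Printing Implicit Defensive.
Local Open Scope classical_set_scope.
Local Open Scope ring_scope.
Local Open Scope convex_scope.

(* Write P(Xi, tau) = (Xi + grad G tau) . (tau + grad Sigma Xi).  If P >= 0 and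
   Xi + grad G tau = 0, then P(Xi + v, tau) = v . (tau + grad Sigma (Xi + v)) >= 0 for
   all v, and letting v -> 0 along +-e_i forces tau + grad Sigma Xi = 0; as P is
   symmetric under (G, Xi) <-> (Sigma, tau), this gives (i).  Taking Xi = - grad G p,
   so that tau + grad Sigma Xi = tau - p by (i), turns P >= 0 into monotonicity of
   grad G along rays, i.e. convexity of G; likewise for Sigma.  Conversely, with
   y = - grad G tau, (i) gives tau = - grad Sigma y, so that
   P(Xi, tau) = (Xi - y) . (grad Sigma Xi - grad Sigma y), which is nonnegative by
   monotonicity of the gradient of the convex function Sigma. *)

Section DotProduct.
Variables (R : realType) (m : nat).
Implicit Types (u v w : 'rV[R]_m) (s : R).

Lemma dotvC u v : dotv u v = dotv v u.
Proof. by apply: eq_bigr => i _; rewrite mulrC. Qed.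

Lemma dotvBl u v w : dotv (u - v) w = dotv u w - dotv v w.
Proof. by rewrite /dotv -sumrB; apply: eq_bigr => i _; rewrite !mxE mulrBl. Qed.

Lemma dotvBr u v w : dotv u (v - w) = dotv u v - dotv u w.
Proof. by rewrite dotvC dotvBl !(dotvC u). Qed.

Lemma dotvZr s u v : dotv u (s *: v) = s * dotv u v.
Proof. by rewrite /dotv mulr_sumr; apply: eq_bigr => i _; rewrite !mxE mulrCA. Qed.

Lemma dotv_evecl (i : 'I_m) s w : dotv (s *: evec R i) w = s * w 0 i.
Proof.
rewrite /dotv (bigD1 i) //= big1 ?addr0 => [|j ji].
  by rewrite !mxE !eqxx mulr1.
by rewrite !mxE (negbTE ji) mulr0 mul0r.
Qed.

End DotProduct.

Lemma continuous_of_is_derive (R : realType) (g dg : R -> R) :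
  (forall t, is_derive t (1 : R) g (dg t)) -> continuous g.
Proof.
move=> Dg t; apply/differentiable_continuous/derivable1_diffP.
exact: (@ex_derive _ _ _ _ _ _ _ (Dg t)).
Qed.

Lemma is_derive_line (R : realType) m (f : 'rV[R]_m -> R) (y v : 'rV[R]_m) (t df : R) :
  is_derive (t *: v + y) v f df -> is_derive t (1 : R) (fun s => f (s *: v + y)) df.
Proof.
move=> [f_der <-].
have quotE : (fun h : R => h^-1 *: (((fun s => f (s *: v + y)) \o shift t) (h *: 1)
      - f (t *: v + y)))
    = (fun h => h^-1 *: ((f \o shift (t *: v + y)) (h *: v) - f (t *: v + y))).
  by apply/funext => h /=; rewrite [h *: 1]mulr1 scalerDl addrA.
by apply: DeriveDef; rewrite /derivable /derive quotE.
Qed.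

Definition row_prefix (R : realType) (m : nat) (v : 'rV[R]_m) (k : nat) : 'rV[R]_m :=
  \row_j (if (j < k)%N then v 0 j else 0).

Lemma row_prefix0 (R : realType) m (v : 'rV[R]_m) : row_prefix v 0 = 0.
Proof. by apply/rowP => j; rewrite !mxE. Qed.

Lemma row_prefix_full (R : realType) m (v : 'rV[R]_m) : row_prefix v m = v.
Proof. by apply/rowP => j; rewrite !mxE ltn_ord. Qed.

Lemma row_prefixS (R : realType) m (v : 'rV[R]_m) (i : 'I_m) :
  row_prefix v i.+1 = v 0 i *: evec R i + row_prefix v i.
Proof.
apply/rowP => j; rewrite !mxE /= ltnS leq_eqVlt.
have [->|ji] := eqVneq j i; first by rewrite eqxx ltnn mulr1 addr0.
by rewrite (_ : j == i :> nat = false) ?mulr0 ?add0r //; apply/negbTE.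
Qed.

Lemma cvg_dominated_shift (R : realType) m (c : R -> R) (a : R) (e w x : 'rV[R]_m) :
  (forall h, `|c h| <= `|h * a|) -> c h *: e + (h *: w + x) @[h --> 0^'] --> x.
Proof.
move=> c_le.
suff : c h *: e + (h *: w + x) @[h --> 0^'] --> 0 *: e + (0 *: w + x).
  by rewrite !scale0r !add0r.
have hlim : h @[h --> (0 : R)^'] --> (0 : R) by apply: cvg_within_filter cvg_id.
have ha0 : `|h * a| @[h --> 0^'] --> (0 : R).
  have ha : h * a @[h --> 0^'] --> 0 * a by apply: cvgMr_tmp.
  by have := cvg_norm ha; rewrite mul0r normr0; apply.
apply: cvgD; last apply: cvgD; last exact: cvg_cst.
- apply: cvgZl; apply: (squeeze_cvgr (f := fun h => - `|h * a|) _ _ ha0).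
    by near=> h; rewrite -ler_norml.
  by have := cvgN ha0; rewrite oppr0; apply.
- exact: cvgZl hlim.
Unshelve. all: end_near.
Qed.

Definition C1 (R : realType) (m : nat) (f : 'rV[R]_m -> R) : Prop :=
  (forall i x, derivable f x (evec R i)) /\ (forall i, continuous (partial i f)).

Lemma C2_C1 (R : realType) (m : nat) (f : 'rV[R]_m -> R) : C2 f -> C1 f.
Proof. by case=> _ Cf; split=> i; have [? [? _]] := Cf i i. Qed.

Section C1Derivatives.
Variables (R : realType) (m : nat) (f : 'rV[R]_m -> R).
Hypothesis f_C1 : C1 f.

Lemma is_derive_along_evec i y t :
  is_derive t (1 : R) (fun s => f (s *: evec R i + y)) (partial i f (t *: evec R i + y)).
Proof. by apply: is_derive_line; apply: DeriveDef; first exact: f_C1.1. Qed.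

Lemma mvt_along_evec i y s : exists c : R,
  `|c| <= `|s| /\ f (s *: evec R i + y) - f y = partial i f (c *: evec R i + y) * s.
Proof.
pose g s := f (s *: evec R i + y).
have Dg := is_derive_along_evec i y.
have g_cont := continuous_of_is_derive Dg.
have g0 : g 0 = f y by rewrite /g scale0r add0r.
have [s_ge0 | s_lt0] := leP 0 s.
  have [c] := MVT_segment s_ge0 (fun x _ => Dg x) (continuous_subspaceT g_cont).
  rewrite in_itv /= -g0 subr0 => /andP[c_ge0 c_le] gE.
  by exists c; rewrite gE !ger0_norm ?(le_trans c_ge0).
have [c] := MVT_segment (ltW s_lt0) (fun x _ => Dg x) (continuous_subspaceT g_cont).
rewrite in_itv /= -g0 add0r => /andP[c_ge c_le0] gE.
exists c; rewrite -[LHS]opprB gE mulrN opprK.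
by rewrite !ler0_norm ?lerN2 ?(ltW s_lt0).
Qed.

(* Telescope along the coordinate path x, x + h v_0 e_0, ..., x + h v, applying the
   one-variable mean value theorem on each segment. *)
Lemma difference_quotient_mvt (x v : 'rV[R]_m) : exists c : 'I_m -> R -> R,
  (forall i h, `|c i h| <= `|h * v 0 i|) /\
  forall h, h != 0 -> h^-1 *: (f (h *: v + x) - f x) =
    \sum_i partial i f (c i h *: evec R i + (h *: row_prefix v i + x)) * v 0 i.
Proof.
pose mvt i h := mvt_along_evec i (h *: row_prefix v i + x) (h * v 0 i).
pose c i h := projT1 (cid (mvt i h)).
have c_spec i h := projT2 (cid (mvt i h)).
exists c; split => [i h | h h0]; first by case: (c_spec i h).
have := telescope_sumr (fun k => f (h *: row_prefix v k + x)) (leq0n m).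
rewrite row_prefix0 row_prefix_full scaler0 add0r => <-.
rewrite -[_ *: _]/(h^-1 * _) big_mkord mulr_sumr; apply: eq_bigr => i _.
case: (c_spec i h) => _ E.
by rewrite row_prefixS scalerDr scalerA -addrA E mulrCA mulKf.
Qed.

Lemma difference_quotient_cvg (x v : 'rV[R]_m) :
  h^-1 *: ((f \o shift x) (h *: v) - f x) @[h --> 0^'] --> dotv (grad f x) v.
Proof.
have [c [c_le quotE]] := difference_quotient_mvt x v.
apply: cvg_trans (near_eq_cvg _) _.
  by near=> h; apply/esym/quotE; near: h; exact: nbhs_dnbhs_neq.
rewrite /dotv; under eq_bigr do rewrite mxE.
apply: (@cvg_big _ _ +%R 0 xpredT add_continuous _ 0^' _
  (fun i h => partial i f (c i h *: evec R i + (h *: row_prefix v i + x)) * v 0 i)) => // i _.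
apply: cvgMr_tmp; apply: (@cvg_comp _ _ _
  (fun h => c i h *: evec R i + (h *: row_prefix v i + x)) _ _ (nbhs x)); last exact: f_C1.2.
exact: cvg_dominated_shift.
Unshelve. all: end_near.
Qed.

Lemma is_derive_grad (x v : 'rV[R]_m) : is_derive x v f (dotv (grad f x) v).
Proof.
have quot_cvg := @difference_quotient_cvg x v.
by apply: DeriveDef; [apply: cvgP quot_cvg | apply: cvg_lim quot_cvg].
Qed.

End C1Derivatives.

Lemma nondecreasing_derive_convex01 (R : realType) (g dg : R -> R) (l : R) :
  (forall t, is_derive t (1 : R) g (dg t)) -> {homo dg : s t / s <= t} ->
  0 <= l -> l <= 1 -> g l <= l * g 1 + (1 - l) * g 0.
Proof.
move=> Dg dg_mono l_ge0 l_le1.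
have g_cont := continuous_of_is_derive Dg.
have [c1] := MVT_segment l_ge0 (fun x _ => Dg x) (continuous_subspaceT g_cont).
rewrite in_itv /= subr0 => /andP[_ c1_le] gl.
have [c2] := MVT_segment l_le1 (fun x _ => Dg x) (continuous_subspaceT g_cont).
rewrite in_itv /= => /andP[c2_ge _] g1.
have : 0 <= l * (1 - l) * (dg c2 - dg c1).
  by rewrite !mulr_ge0 ?subr_ge0 // dg_mono // (le_trans c1_le).
nra.
Qed.

Lemma conv_lmodE (R : realType) m (x y : convex_lmodType 'rV[R]_m) (t : {i01 R}) :
  x <| t |> y = t%:num *: (x : 'rV[R]_m) + (1 - t%:num) *: (y : 'rV[R]_m).
Proof. by []. Qed.

Section ConvexityFirstOrder.
Variables (R : realType) (m : nat) (f : 'rV[R]_m -> R).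
Hypothesis f_C1 : C1 f.

Lemma convex_of_grad_monotone :
  (forall (p d : 'rV[R]_m) (t : R), 0 < t -> 0 <= dotv (grad f (t *: d + p) - grad f p) d) ->
  convex_function setT f.
Proof.
move=> grad_mono t x y _ _; rewrite conv_lmodE convRE.
pose d : 'rV[R]_m := x - y.
have Dline s := is_derive_line (is_derive_grad f_C1 (s *: d + y) d).
have slope_mono : {homo (fun s => dotv (grad f (s *: d + y)) d) : s u / s <= u}.
  move=> s u; rewrite le_eqVlt => /predU1P[->//|su].
  have := grad_mono (s *: d + y) d (u - s); rewrite subr_gt0 => /(_ su).
  by rewrite addrA -scalerDl subrK dotvBl subr_ge0.
have t_ge0 : 0 <= t%:num by [].
have t_le1 : t%:num <= 1 by [].
have := nondecreasing_derive_convex01 Dline slope_mono t_ge0 t_le1.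
by rewrite scale1r scale0r add0r /d subrK scalerBr scalerBl scale1r addrA addrAC.
Qed.

Hypothesis f_convex : convex_function setT f.

Lemma convex_grad_le (x y : 'rV[R]_m) : dotv (grad f x) (y - x) <= f y - f x.
Proof.
have quot_cvg := @difference_quotient_cvg _ _ _ f_C1 x (y - x).
have right_cvg := cvg_dnbhs_at_right quot_cvg.
apply: (cvgr_to_le right_cvg); near=> h.
have h_gt0 : 0 < h by near: h; exact: nbhs_right_gt.
have h_lt1 : h < 1 by near: h; exact: nbhs_right_lt ltr01.
have t_ge0 : 0 <= 1 - h by lra.
have t_le1 : 1 - h <= 1 by lra.
have := f_convex (Itv01 t_ge0 t_le1) (in_setT x) (in_setT y).
rewrite conv_lmodE convRE /= /unstable.onem (_ : 1 - (1 - h) = h); last by lra.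
have -> : h *: (y - x) + x = (1 - h) *: x + h *: y.
  by rewrite scalerBr scalerBl scale1r [LHS]addrC [LHS]addrCA [LHS]addrC.
move=> cvx_ineq; rewrite -[h^-1 *: _]/(h^-1 * _) mulrC ler_pdivrMr //; nra.
Unshelve. all: end_near.
Qed.

Lemma convex_grad_monotone (x y : 'rV[R]_m) : 0 <= dotv (grad f y - grad f x) (y - x).
Proof.
have := convex_grad_le x y; have := convex_grad_le y x.
rewrite dotvBl !dotvBr; lra.
Qed.

End ConvexityFirstOrder.

Lemma dotv_shift_ge0_eq0 (R : realType) m (F : 'rV[R]_m -> 'rV[R]_m) (x : 'rV[R]_m) :
  (forall i, continuous (fun z => F z 0 i)) ->
  (forall v, 0 <= dotv v (F (x + v))) -> F x = 0.
Proof.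
move=> F_cont F_ge0; apply/rowP => i; rewrite mxE.
pose phi s := F (x + s *: evec R i) 0 i.
have phi0 : phi 0 = F x 0 i by rewrite /phi scale0r addr0.
have s_phi_ge0 s : 0 <= s * phi s by have := F_ge0 (s *: evec R i); rewrite dotv_evecl.
have phi_cont : phi s @[s --> 0] --> phi 0.
  apply: (@cvg_comp _ _ _ (fun s => x + s *: evec R i) (fun z => F z 0 i) _
    (nbhs (x + 0 *: evec R i))).
    by apply: cvgD; [exact: cvg_cst | apply: cvgZ; [exact: cvg_id | exact: cvg_cst]].
  exact: F_cont.
rewrite -phi0; apply/eqP; rewrite eq_le; apply/andP; split.
- apply: (cvgr_to_le (cvg_at_left_filter phi_cont)); near=> s.
  have s_lt0 : s < 0 by near: s; exact: nbhs_left_lt.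
  by have := s_phi_ge0 s; rewrite nmulr_rge0.
- apply: (cvgr_to_ge (cvg_at_right_filter phi_cont)); near=> s.
  have s_gt0 : 0 < s by near: s; exact: nbhs_right_gt.
  by have := s_phi_ge0 s; rewrite pmulr_rge0.
Unshelve. all: end_near.
Qed.

Lemma continuous_addr_grad (R : realType) m (f : 'rV[R]_m -> R) (c : 'rV[R]_m) i :
  C1 f -> continuous (fun x => (c + grad f x) 0 i).
Proof.
move=> f_C1; have -> : (fun x => (c + grad f x) 0 i) = fun x => c 0 i + partial i f x.
  by apply/funext => z; rewrite !mxE.
by move=> x; apply: continuousD; [exact: cst_continuous | exact: f_C1.2].
Qed.

Definition pairing_nonneg (R : realType) m (G Sigma : 'rV[R]_m -> R) : Prop :=
  forall Xi tau : 'rV[R]_m, 0 <= dotv (Xi + grad G tau) (tau + grad Sigma Xi).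

Lemma pairing_nonnegC (R : realType) m (G Sigma : 'rV[R]_m -> R) :
  pairing_nonneg G Sigma -> pairing_nonneg Sigma G.
Proof. by move=> pos Xi tau; rewrite dotvC; apply: pos. Qed.

Section PairingNonneg.
Variables (R : realType) (m : nat) (G Sigma : 'rV[R]_m -> R).
Hypotheses (G_C1 : C1 G) (Sigma_C1 : C1 Sigma) (pos : pairing_nonneg G Sigma).

Lemma pairing_nonneg_critical (Xi tau : 'rV[R]_m) :
  Xi + grad G tau = 0 -> tau + grad Sigma Xi = 0.
Proof.
move=> crit; apply: (dotv_shift_ge0_eq0 (F := fun z => tau + grad Sigma z)) => [i|v].
  exact: continuous_addr_grad.
by have := pos (Xi + v) tau; rewrite addrAC crit add0r.
Qed.

Lemma pairing_nonneg_convex : convex_function setT G.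
Proof.
apply: convex_of_grad_monotone G_C1 _ => p d t t_gt0.
have := pos (- grad G p) (t *: d + p).
rewrite -addrA (pairing_nonneg_critical (addNr _)) addr0 addrC dotvZr pmulr_rge0 //.
Qed.

End PairingNonneg.

Lemma convex_pairing_nonneg (R : realType) m (G Sigma : 'rV[R]_m -> R) :
  C1 Sigma -> convex_function setT Sigma ->
  (forall Xi tau, Xi + grad G tau = 0 -> tau + grad Sigma Xi = 0) ->
  pairing_nonneg G Sigma.
Proof.
move=> Sigma_C1 Sigma_convex crit Xi tau; pose y := - grad G tau.
have tauE : tau = - grad Sigma y by apply/eqP; rewrite -addr_eq0 crit // addNr.
rewrite -[grad G tau]opprK -/y tauE dotvC ![- _ + _]addrC.
exact: convex_grad_monotone.
Qed.

Theorem lemma3p1 (R : realType) (m : nat) (G Sigma : 'rV[R]_m -> R) :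
  (1 <= m)%N -> C2 G -> C2 Sigma ->
  ((forall Xi tau : 'rV[R]_m,
      0 <= dotv (Xi + grad G tau) (tau + grad Sigma Xi))
   <->
   [/\ (forall Xi tau : 'rV[R]_m,
          Xi + grad G tau = 0 <-> tau + grad Sigma Xi = 0),
       convex_function setT G &
       convex_function setT Sigma]).
Proof.
move=> _ /C2_C1 G_C1 /C2_C1 Sigma_C1; split => [pos | [crit _ Sigma_convex]].
  have posC := pairing_nonnegC pos.
  split; [split | exact: pairing_nonneg_convex pos | exact: pairing_nonneg_convex posC].
  - exact: pairing_nonneg_critical.
  - exact: pairing_nonneg_critical posC tau Xi.
by apply: convex_pairing_nonneg => // Xi tau /crit.
Qed.
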